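(* Let $K_0=0$ and let $\Omega\subset\mathbb R^d$ be a bounded convex domain with $C^1$ boundary, with inner unit normal $\nu(X)$ at $X\in\partial\Omega$. Define $$h_*(x)=\inf_{X\in\partial\Omega}\big[h_0+\lambda_0\,\nu(X)\cdot(x-X)\big],\qquad x\in\mathbb R^d$$ (equivalently, the lower envelope of all affine functions $H$ with $|\nabla H|=\lambda_0$, $H\ge h_0$ on $\Omega$ and $H(X)=h_0$ for some $X\in\partial\Omega$). Then $h_*$ (restricted to $\mathbb R^d\setminus\Omega$) is a weak solution of $\det D^2(-u)=0$ in $\{u>0\}\setminus\overline\Omega$, $u=h_0$ on $\partial\Omega$, $|\nabla u|=\lambda_0$ on $\Gamma_u$.
   Context: Setting: $d\ge 2$; $h_0>0$, $\lambda_0>0$ constants. For $u:\mathbb R^d\setminus\Omega\to\mathbb R$ let $U$ denote the function equal to $u$ off $\Omega$ and to $h_0$ on $\Omega$; $u$ is called concave if $U$ is concave on $\mathbb R^d$. Write $\{u>0\}$ for $\{U>0\}$ and $\Gamma_u=\partial\{u>0\}\setminus\overline\Omega$. For a convex function $f$ on an open set $D$, $\omega_x(f)=\{p: f(y)\ge f(x)+p\cdot(y-x)\ \forall y\in D\}$ and $\omega_E(f)=\bigcup_{x\in E}\omega_x(f)$. A concave $u$ is a weak solution (with $K_0=0$) if: (a) $|\omega_E(-u)|=0$ for every Borel $E\subset\{u>0\}\setminus\overline\Omega$ (gradient mapping of $-u$ on $\{u>0\}\setminus\overline\Omega$); (b) $u=h_0$ on $\partial\Omega$; (c) at every $x_0\in\Gamma_u$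 at which the convex set $\{u>0\}$ has a unique supporting hyperplane, with inner unit normal $\nu$, $\lim_{t\downarrow 0}u(x_0+t\nu)/t=\lambda_0$. *)

From Stdlib Require Import Reals Lra ClassicalEpsilon.
Open Scope R_scope.

(* Points of R^d are represented by functions nat -> R vanishing at indices >= d. *)
Definition pt := nat -> R.
Definition in_Rd (d : nat) (x : pt) : Prop := forall i, (d <= i)%nat -> x i = 0.

Fixpoint dot (d : nat) (x y : pt) : R :=
  match d with O => 0 | S n => dot n x y + x n * y n end.
Definition norm (d : nat) (x : pt) : R := sqrt (dot d x x).
Definition vadd (x y : pt) : pt := fun i => x i + y i.
Definition vsub (x y : pt) : pt := fun i => x i - y i.
Definition vscal (a : R) (x : pt) : pt := fun i => a * x i.
Definition veq (d : nat) (x y : pt) : Prop := forall i, (i < d)%nat -> x i = y i.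

Definition open_Rd (d : nat) (S : pt -> Prop) : Prop :=
  forall x, S x -> in_Rd d x /\
    exists r, r > 0 /\ forall y, in_Rd d y -> norm d (vsub y x) < r -> S y.
Definition closure (d : nat) (S : pt -> Prop) (x : pt) : Prop :=
  in_Rd d x /\ forall eps, eps > 0 -> exists y, S y /\ norm d (vsub y x) < eps.
Definition bdry (d : nat) (S : pt -> Prop) (x : pt) : Prop :=
  closure d S x /\ closure d (fun y => in_Rd d y /\ ~ S y) x.
Definition connected (d : nat) (S : pt -> Prop) : Prop :=
  forall A B : pt -> Prop, open_Rd d A -> open_Rd d B ->
    (forall x, S x -> A x \/ B x) -> (forall x, S x -> A x -> B x -> False) ->
    (exists x, S x /\ A x) -> (exists x, S x /\ B x) -> False.
Definition convex_set (d : nat) (S : pt -> Prop) : Prop :=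
  forall x y t, S x -> S y -> 0 <= t <= 1 -> S (vadd (vscal t x) (vscal (1 - t) y)).
Definition bounded_set (d : nat) (S : pt -> Prop) : Prop :=
  exists M, forall x, S x -> norm d x <= M.

Definition has_grad (d : nat) (f : pt -> R) (g x : pt) : Prop :=
  in_Rd d g /\ forall eps, eps > 0 -> exists delta, delta > 0 /\
    forall y, in_Rd d y -> norm d (vsub y x) < delta ->
      Rabs (f y - f x - dot d g (vsub y x)) <= eps * norm d (vsub y x).
Definition C1_on_ball (d : nat) (rho : pt -> R) (G : pt -> pt) (c : pt) (r : R) : Prop :=
  forall x, in_Rd d x -> norm d (vsub x c) < r ->
    has_grad d rho (G x) x /\
    (forall eps, eps > 0 -> exists delta, delta > 0 /\
       forall y, in_Rd d y -> norm d (vsub y c) < r -> norm d (vsub y x) < delta ->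
         norm d (vsub (G y) (G x)) < eps).

Definition C1_domain_inner_normal (d : nat) (Om : pt -> Prop) (nu : pt -> pt) : Prop :=
  forall X, bdry d Om X -> exists r rho G, r > 0 /\ C1_on_ball d rho G X r /\
    (forall x, in_Rd d x -> norm d (vsub x X) < r -> (Om x <-> rho x < 0)) /\
    norm d (G X) <> 0 /\ in_Rd d (nu X) /\
    veq d (nu X) (vscal (- / norm d (G X)) (G X)).

Definition is_inf (E : R -> Prop) (m : R) : Prop :=
  (forall v, E v -> m <= v) /\ (forall m', (forall v, E v -> m' <= v) -> m' <= m).

Inductive borel (d : nat) : (pt -> Prop) -> Prop :=
| borel_open S : open_Rd d S -> borel d S
| borel_compl S : borel d S -> borel d (fun x => in_Rd d x /\ ~ S x)
| borel_union (F : nat -> pt -> Prop) : (forall n, borel d (F n)) -> borel d (fun x => exists n, F n x)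
| borel_ext S T : borel d S -> (forall x, in_Rd d x -> (S x <-> T x)) -> borel d T.

Fixpoint box_vol (d : nat) (a b : pt) : R :=
  match d with O => 1 | S n => box_vol n a b * (b n - a n) end.
Definition null_set (d : nat) (S : pt -> Prop) : Prop :=
  forall eps, eps > 0 -> exists a b : nat -> pt,
    (forall k i, (i < d)%nat -> a k i <= b k i) /\
    (forall x, in_Rd d x -> S x -> exists k, forall i, (i < d)%nat -> a k i <= x i <= b k i) /\
    (forall N, sum_f_R0 (fun k => box_vol d (a k) (b k)) N < eps).

Definition ext (Om : pt -> Prop) (h0 : R) (u : pt -> R) (x : pt) : R :=
  if excluded_middle_informative (Om x) then h0 else u x.
Definition concave_on_Rd (d : nat) (f : pt -> R) : Prop :=
  forall x y t, in_Rd d x -> in_Rd d y -> 0 <= t <= 1 ->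
    f (vadd (vscal t x) (vscal (1 - t) y)) >= t * f x + (1 - t) * f y.
Definition pos_set (d : nat) (Om : pt -> Prop) (h0 : R) (u : pt -> R) (x : pt) : Prop :=
  in_Rd d x /\ ext Om h0 u x > 0.
Definition free_region (d : nat) (Om : pt -> Prop) (h0 : R) (u : pt -> R) (x : pt) : Prop :=
  pos_set d Om h0 u x /\ ~ closure d Om x.
Definition subgrad (d : nat) (f : pt -> R) (D : pt -> Prop) (x p : pt) : Prop :=
  in_Rd d p /\ forall y, D y -> f y >= f x + dot d p (vsub y x).
Definition grad_image (d : nat) (f : pt -> R) (D E : pt -> Prop) (p : pt) : Prop :=
  exists x, E x /\ subgrad d f D x p.
Definition Gamma (d : nat) (Om : pt -> Prop) (h0 : R) (u : pt -> R) (x : pt) : Prop :=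
  bdry d (pos_set d Om h0 u) x /\ ~ closure d Om x.
Definition supp_normal (d : nat) (S : pt -> Prop) (x0 n : pt) : Prop :=
  in_Rd d n /\ norm d n = 1 /\ forall y, S y -> dot d n (vsub y x0) >= 0.

Definition weak_solution (d : nat) (Om : pt -> Prop) (h0 lam0 : R) (u : pt -> R) : Prop :=
  concave_on_Rd d (ext Om h0 u) /\
  (forall E, borel d E -> (forall x, E x -> free_region d Om h0 u x) ->
     null_set d (grad_image d (fun x => - ext Om h0 u x) (free_region d Om h0 u) E)) /\
  (forall X, bdry d Om X -> u X = h0) /\
  (forall x0 nu, Gamma d Om h0 u x0 -> supp_normal d (pos_set d Om h0 u) x0 nu ->
     (forall n, supp_normal d (pos_set d Om h0 u) x0 n -> veq d n nu) ->
     forall eps, eps > 0 -> exists delta, delta > 0 /\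
       forall t, 0 < t < delta ->
         Rabs (ext Om h0 u (vadd x0 (vscal t nu)) / t - lam0) < eps).

(* For x outside the closed convex set Om, its nearest point X lies on the boundary and
   the inner normal nu X points from x to X, so the affine function of X takes the value
   h0 - lam0 |x - X| at x, while every other one is at least that: off Om the envelope is
   h0 - lam0 dist(x, Om). Concavity holds because h_* is an infimum of affine functions,
   h_* = h0 on the boundary, and Gamma is the level set at distance h0 / lam0, across
   which h_* grows at rate lam0 along the normal. Finally every supergradient p of h_*
   off Om has |p| = lam0 (test along the segment to X and along p, using that h_* is
   lam0-Lipschitz), so the gradient image lies in a sphere, which is covered by boxes
   over a grid of the first d - 1 coordinates with total volume O(sqrt h). *)

From Stdlib Require Import Reals Lra Lia Psatz FunctionalExtensionality ClassicalEpsilon Classical.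
Open Scope R_scope.

Ltac vec_ring := apply functional_extensionality; intro; unfold vsub, vadd, vscal; ring.

Lemma dot_sym d x y : dot d x y = dot d y x.
Proof. induction d; simpl; [ring | rewrite IHd; ring]. Qed.

Lemma dot_add_l d x y z : dot d (vadd x y) z = dot d x z + dot d y z.
Proof. induction d; simpl; [ring | rewrite IHd; unfold vadd; ring]. Qed.

Lemma dot_sub_l d x y z : dot d (vsub x y) z = dot d x z - dot d y z.
Proof. induction d; simpl; [ring | rewrite IHd; unfold vsub; ring]. Qed.

Lemma dot_scal_l d a x z : dot d (vscal a x) z = a * dot d x z.
Proof. induction d; simpl; [ring | rewrite IHd; unfold vscal; ring]. Qed.

Lemma dot_add_r d x y z : dot d z (vadd x y) = dot d z x + dot d z y.
Proof. rewrite !(dot_sym d z); apply dot_add_l. Qed.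

Lemma dot_sub_r d x y z : dot d z (vsub x y) = dot d z x - dot d z y.
Proof. rewrite !(dot_sym d z); apply dot_sub_l. Qed.

Lemma dot_scal_r d a x z : dot d z (vscal a x) = a * dot d z x.
Proof. rewrite !(dot_sym d z); apply dot_scal_l. Qed.

Lemma dot_sub_diag_r d v w : dot d v (vsub w w) = 0.
Proof. replace (vsub w w) with (vscal 0 w) by vec_ring. rewrite dot_scal_r; ring. Qed.

Lemma dot_self_nonneg d x : 0 <= dot d x x.
Proof. induction d; simpl; nra. Qed.

Lemma coord_sq_le_dot d x i : (i < d)%nat -> (x i) ^ 2 <= dot d x x.
Proof.
  intro Hi; induction d; [lia |]; simpl.
  pose proof (dot_self_nonneg d x).
  destruct (Nat.eq_dec i d); [subst; nra |].
  specialize (IHd ltac:(lia)); nra.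
Qed.

Lemma dot_self_le d v c : (forall i, (i < d)%nat -> (v i) ^ 2 <= c) -> dot d v v <= INR d * c.
Proof.
  induction d; intro H; simpl dot; [simpl; lra |]. rewrite S_INR.
  assert (dot d v v <= INR d * c) by (apply IHd; intros; apply H; lia).
  specialize (H d ltac:(lia)); nra.
Qed.

Lemma dot_veq_l d x y z : veq d x y -> dot d x z = dot d y z.
Proof.
  intro H; induction d; simpl; auto.
  rewrite IHd, H; auto. intros i Hi; apply H; lia.
Qed.

Lemma dot_self_eq0_l d x y : dot d x x = 0 -> dot d x y = 0.
Proof.
  induction d; simpl; intro H; auto.
  pose proof (dot_self_nonneg d x).
  assert (Hxd : x d = 0) by nra.
  rewrite IHd, Hxd; [ring | nra].
Qed.

Lemma veq_of_dot_eq d u v : (forall w, dot d u w = dot d v w) -> veq d u v.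
Proof.
  intros H i Hi. specialize (H (vsub u v)).
  assert (Hz : dot d (vsub u v) (vsub u v) = 0) by (rewrite dot_sub_l; lra).
  pose proof (coord_sq_le_dot d (vsub u v) i Hi) as Hc.
  rewrite Hz in Hc. unfold vsub in Hc. nra.
Qed.

Lemma dot_sq_le d x y : (dot d x y) ^ 2 <= dot d x x * dot d y y.
Proof.
  pose proof (dot_self_nonneg d x); pose proof (dot_self_nonneg d y).
  destruct (Req_dec (dot d y y) 0) as [E | E].
  - rewrite dot_sym, dot_self_eq0_l by auto. nra.
  - set (t := dot d x y / dot d y y).
    pose proof (dot_self_nonneg d (vsub x (vscal t y))) as Hq.
    rewrite dot_sub_l, !dot_sub_r, !dot_scal_l, !dot_scal_r, (dot_sym d y x) in Hq.
    replace (dot d x x - t * dot d x y - (t * dot d x y - t * (t * dot d y y)))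
      with ((dot d x x * dot d y y - (dot d x y) ^ 2) / dot d y y) in Hq
      by (unfold t; field; lra).
    apply Rmult_le_compat_r with (r := dot d y y) in Hq; [| lra].
    replace ((dot d x x * dot d y y - (dot d x y) ^ 2) / dot d y y * dot d y y)
      with (dot d x x * dot d y y - (dot d x y) ^ 2) in Hq by (field; lra).
    lra.
Qed.

Lemma norm_nonneg d x : 0 <= norm d x.
Proof. apply sqrt_pos. Qed.

Lemma norm_sq d x : norm d x * norm d x = dot d x x.
Proof. apply sqrt_sqrt, dot_self_nonneg. Qed.

Lemma Rsqr_le_nonneg a b : 0 <= b -> a * a <= b * b -> a <= b.
Proof. intros; nra. Qed.

Lemma Rabs_dot_le d x y : Rabs (dot d x y) <= norm d x * norm d y.
Proof.
  pose proof (norm_nonneg d x); pose proof (norm_nonneg d y).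
  apply Rsqr_le_nonneg; [nra |].
  rewrite <- Rabs_mult, Rabs_pos_eq by nra.
  replace (norm d x * norm d y * (norm d x * norm d y))
    with ((norm d x * norm d x) * (norm d y * norm d y)) by ring.
  rewrite !norm_sq. pose proof (dot_sq_le d x y). simpl in H1. lra.
Qed.

Lemma dot_le_norm d x y : dot d x y <= norm d x * norm d y.
Proof. pose proof (Rabs_dot_le d x y); pose proof (Rle_abs (dot d x y)); lra. Qed.

Lemma dot_ge_neg_norm d x y : - (norm d x * norm d y) <= dot d x y.
Proof.
  pose proof (Rabs_dot_le d x y); pose proof (Rle_abs (- dot d x y)).
  rewrite Rabs_Ropp in H0; lra.
Qed.

Lemma norm_triangle d x y : norm d (vadd x y) <= norm d x + norm d y.
Proof.
  pose proof (norm_nonneg d x); pose proof (norm_nonneg d y).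
  apply Rsqr_le_nonneg; [lra |].
  rewrite norm_sq, dot_add_l, !dot_add_r, (dot_sym d y x).
  pose proof (dot_le_norm d x y); pose proof (norm_sq d x); pose proof (norm_sq d y). nra.
Qed.

Lemma norm_scal d a x : norm d (vscal a x) = Rabs a * norm d x.
Proof.
  unfold norm. rewrite dot_scal_l, dot_scal_r, <- Rmult_assoc, sqrt_mult_alt.
  - rewrite <- sqrt_Rsqr_abs; reflexivity.
  - pose proof (Rle_0_sqr a); unfold Rsqr in *; lra.
Qed.

Lemma norm_sub_sym d x y : norm d (vsub x y) = norm d (vsub y x).
Proof.
  replace (vsub x y) with (vscal (-1) (vsub y x)) by vec_ring.
  rewrite norm_scal, Rabs_left by lra; ring.
Qed.

Lemma norm_sub_diag d x : norm d (vsub x x) = 0.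
Proof. replace (vsub x x) with (vscal 0 x) by vec_ring. rewrite norm_scal, Rabs_R0; ring. Qed.

Lemma norm_sub_triangle d x y z : norm d (vsub x z) <= norm d (vsub x y) + norm d (vsub y z).
Proof. replace (vsub x z) with (vadd (vsub x y) (vsub y z)) by vec_ring. apply norm_triangle. Qed.

Lemma in_Rd_add d x y : in_Rd d x -> in_Rd d y -> in_Rd d (vadd x y).
Proof. unfold in_Rd, vadd; intros Hx Hy i Hi; rewrite Hx, Hy; auto; ring. Qed.

Lemma in_Rd_sub d x y : in_Rd d x -> in_Rd d y -> in_Rd d (vsub x y).
Proof. unfold in_Rd, vsub; intros Hx Hy i Hi; rewrite Hx, Hy; auto; ring. Qed.

Lemma in_Rd_scal d a x : in_Rd d x -> in_Rd d (vscal a x).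
Proof. unfold in_Rd, vscal; intros Hx i Hi; rewrite Hx; auto; ring. Qed.

Lemma veq_in_Rd_eq d x y : in_Rd d x -> in_Rd d y -> veq d x y -> x = y.
Proof.
  intros Hx Hy H; apply functional_extensionality; intro i.
  destruct (Compare_dec.le_lt_dec d i); [rewrite Hx, Hy | apply H]; auto.
Qed.

Lemma unit_dot_eq_of_halfspace d u g : in_Rd d u -> in_Rd d g ->
  dot d u u = 1 -> dot d g g = 1 ->
  (forall v, in_Rd d v -> dot d g v < 0 -> dot d u v <= 0) ->
  forall w, dot d u w = dot d g w.
Proof.
  intros Hu Hg Huu Hgg Hhalf w.
  assert (Hgu : dot d g u >= 1).
  { destruct (Rlt_or_le (dot d g u) 1) as [Hlt |]; [| lra]. exfalso.
    specialize (Hhalf (vsub u g) (in_Rd_sub d u g Hu Hg)).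
    rewrite !dot_sub_r, Hgg, Huu, (dot_sym d u g) in Hhalf. lra. }
  assert (Hz : dot d (vsub u g) (vsub u g) = 0).
  { pose proof (dot_le_norm d g u) as Hcs. unfold norm in Hcs.
    rewrite Hgg, Huu, sqrt_1 in Hcs.
    rewrite dot_sub_l, !dot_sub_r, Hgg, Huu, (dot_sym d u g). lra. }
  pose proof (dot_self_eq0_l d (vsub u g) w Hz). rewrite dot_sub_l in H. lra.
Qed.

Lemma exists_small_scale a b : a > 0 -> b >= 0 -> exists s, 0 < s <= 1 /\ s * b < a.
Proof.
  intros Ha Hb. set (s := Rmin 1 (a / (2 * (b + 1)))).
  assert (Hs0 : 0 < s) by (apply Rmin_pos; [lra | apply Rdiv_lt_0_compat; lra]).
  assert (Hs1 : s <= a / (2 * (b + 1))) by apply Rmin_r.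
  assert (a / (2 * (b + 1)) * (2 * (b + 1)) = a) by (field; lra).
  exists s; split; [split; [lra | apply Rmin_l] | nra].
Qed.

Lemma has_grad_continuous d f g X : has_grad d f g X ->
  forall e, e > 0 -> exists delta, delta > 0 /\
    forall y, in_Rd d y -> norm d (vsub y X) < delta -> Rabs (f y - f X) < e.
Proof.
  intros [_ Hf] e He.
  destruct (Hf 1 ltac:(lra)) as [d1 [Hd1 Hd1']].
  set (delta := Rmin d1 (e / (2 * (norm d g + 1)))).
  pose proof (norm_nonneg d g).
  assert (Hdel : delta > 0) by (apply Rmin_pos; [lra | apply Rdiv_lt_0_compat; lra]).
  assert (delta <= d1) by apply Rmin_l.
  assert (Hdel2 : delta * (2 * (norm d g + 1)) <= e).
  { pose proof (Rmin_r d1 (e / (2 * (norm d g + 1)))).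
    assert (e / (2 * (norm d g + 1)) * (2 * (norm d g + 1)) = e) by (field; lra).
    fold delta in H1. nra. }
  exists delta; split; auto. intros y Hy Hyd.
  specialize (Hd1' y Hy ltac:(lra)).
  pose proof (Rabs_dot_le d g (vsub y X)). pose proof (norm_nonneg d (vsub y X)).
  pose proof (Rabs_triang (f y - f X - dot d g (vsub y X)) (dot d g (vsub y X))) as Htri.
  replace (f y - f X - dot d g (vsub y X) + dot d g (vsub y X)) with (f y - f X) in Htri by ring.
  nra.
Qed.

(* The error term is at most half the linear part, so f moves with the sign of g.v. *)
Lemma has_grad_step d f g X v r : has_grad d f g X -> in_Rd d X -> in_Rd d v ->
  dot d g v <> 0 -> r > 0 ->
  exists s, 0 < s <= 1 /\ s * norm d v < r /\
    Rabs (f (vadd X (vscal s v)) - f X - s * dot d g v) <= s * Rabs (dot d g v) / 2.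
Proof.
  intros [_ Hf] HX Hv Hgv Hr.
  pose proof (norm_nonneg d v). pose proof (Rabs_pos_lt _ Hgv).
  set (eps := Rabs (dot d g v) / (2 * (norm d v + 1))).
  destruct (Hf eps ltac:(apply Rdiv_lt_0_compat; lra)) as [delta [Hdel Hest]].
  destruct (exists_small_scale (Rmin delta r) (norm d v)) as [s [Hs Hsv]];
    [apply Rmin_pos; lra | lra |].
  pose proof (Rmin_l delta r); pose proof (Rmin_r delta r).
  exists s; do 2 (split; [auto; lra |]).
  assert (Hstep : vsub (vadd X (vscal s v)) X = vscal s v) by vec_ring.
  specialize (Hest (vadd X (vscal s v)) ltac:(apply in_Rd_add, in_Rd_scal; auto)).
  rewrite Hstep, norm_scal, Rabs_pos_eq, dot_scal_r in Hest by lra.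
  specialize (Hest ltac:(lra)).
  assert (eps * (norm d v + 1) = Rabs (dot d g v) / 2) by (unfold eps; field; lra).
  nra.
Qed.

Lemma coord_abs_le_norm d x i : (i < d)%nat -> Rabs (x i) <= norm d x.
Proof.
  intro Hi. apply Rsqr_le_nonneg; [apply norm_nonneg |].
  rewrite norm_sq, <- Rabs_mult, Rabs_pos_eq by nra.
  pose proof (coord_sq_le_dot d x i Hi). simpl in H. lra.
Qed.

Lemma exists_inv_sqrt_lt C eps : C >= 0 -> eps > 0 -> exists n, C * sqrt (/ INR (S n)) < eps.
Proof.
  intros HC Heps.
  destruct (archimed_cor1 ((eps / (C + 1)) ^ 2)) as [N [HN HN0]].
  { apply pow_lt, Rdiv_lt_0_compat; lra. }
  exists (pred N). replace (S (pred N)) with N by lia.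
  assert (Hs : sqrt (/ INR N) < eps / (C + 1)).
  { rewrite <- (sqrt_pow2 (eps / (C + 1))) by (apply Rlt_le, Rdiv_lt_0_compat; lra).
    apply sqrt_lt_1_alt; split; [left; apply Rinv_0_lt_compat, lt_0_INR |]; auto. }
  pose proof (sqrt_pos (/ INR N)).
  assert (eps / (C + 1) * (C + 1) = eps) by (field; lra). nra.
Qed.

Lemma le_of_forall_pos_lt a b : (forall eps, eps > 0 -> a < b + eps) -> a <= b.
Proof. intro H. destruct (Rle_or_lt a b); [lra |]. specialize (H (a - b)); lra. Qed.

Lemma Un_cv_dist_le (u : nat -> R) l a s N : Un_cv u l ->
  (forall m, (N <= m)%nat -> Rabs (a - u m) <= s) -> Rabs (a - l) <= s.
Proof.
  intros Hu H. destruct (Rle_or_lt (Rabs (a - l)) s) as [| Hlt]; auto. exfalso.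
  destruct (Hu (Rabs (a - l) - s)) as [M HM]; [lra |].
  specialize (HM (max N M) ltac:(lia)); specialize (H (max N M) ltac:(lia)).
  unfold Rdist in HM. pose proof (Rabs_triang (a - u (max N M)) (u (max N M) - l)).
  replace (a - u (max N M) + (u (max N M) - l)) with (a - l) in H0 by ring. lra.
Qed.

Lemma cauchy_pt_limit d (z : nat -> pt) c : (forall n, in_Rd d (z n)) ->
  (forall n m, (n <= m)%nat -> norm d (vsub (z n) (z m)) <= c * sqrt (/ INR (S n))) ->
  exists X, in_Rd d X /\
    forall n, norm d (vsub (z n) X) <= sqrt (INR d) * c * sqrt (/ INR (S n)).
Proof.
  intros Hz Hcau.
  set (t n := sqrt (/ INR (S n))).
  assert (Hc : 0 <= c).
  { pose proof (Hcau 0%nat 0%nat (le_n 0)) as H0. rewrite norm_sub_diag in H0.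
    replace (/ INR 1) with 1 in H0 by (simpl; field). rewrite sqrt_1 in H0. lra. }
  assert (Hcoord : forall i n m, (n <= m)%nat -> Rabs (z n i - z m i) <= c * t n).
  { intros i n m Hnm. destruct (Compare_dec.lt_dec i d) as [Hi | Hi].
    - eapply Rle_trans; [apply (coord_abs_le_norm d (vsub (z n) (z m)) i Hi) | apply Hcau; auto].
    - rewrite (Hz n i), (Hz m i) by lia. rewrite Rminus_0_r, Rabs_R0.
      apply Rmult_le_pos; [lra | apply sqrt_pos]. }
  assert (Hcc : forall i, Cauchy_crit (fun n => z n i)).
  { intros i eps Heps. destruct (exists_inv_sqrt_lt c eps) as [N HN]; [lra | lra |].
    exists N. intros n m Hn Hm. unfold Rdist.
    assert (Ht : forall k, (N <= k)%nat -> c * t k <= c * t N).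
    { intros k Hk. apply Rmult_le_compat_l; auto.
      apply sqrt_le_1_alt, Rinv_le_contravar; [apply lt_0_INR; lia | apply le_INR; lia]. }
    destruct (Nat.le_ge_cases n m) as [Hnm | Hmn].
    - pose proof (Hcoord i n m Hnm); pose proof (Ht n Hn); unfold t in *; lra.
    - rewrite Rabs_minus_sym. pose proof (Hcoord i m n Hmn); pose proof (Ht m Hm).
      unfold t in *; lra. }
  set (X i := proj1_sig (R_complete _ (Hcc i))).
  assert (HX : forall i, Un_cv (fun n => z n i) (X i)).
  { intro i. unfold X. destruct (R_complete _ (Hcc i)); auto. }
  assert (HXz : forall n i, Rabs (z n i - X i) <= c * t n).
  { intros n i. apply (Un_cv_dist_le _ _ _ _ n (HX i)). intros m Hm; apply Hcoord; auto. }
  exists X; split.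
  - intros i Hi. apply (UL_sequence (fun n => z n i)); auto.
    intros eps Heps; exists 0%nat; intros n _. unfold Rdist.
    rewrite (Hz n i) by lia. rewrite Rminus_0_r, Rabs_R0; auto.
  - intro n. unfold norm. change (sqrt (/ INR (S n))) with (t n).
    assert (0 <= t n) by apply sqrt_pos.
    rewrite Rmult_assoc, <- (sqrt_pow2 (c * t n)) by (apply Rmult_le_pos; auto).
    rewrite <- sqrt_mult_alt by apply pos_INR.
    apply sqrt_le_1_alt, dot_self_le. intros i _. unfold vsub.
    pose proof (HXz n i). pose proof (Rabs_pos (z n i - X i)).
    rewrite <- pow2_abs. nra.
Qed.

Lemma minimizing_sequence (f : pt -> R) (A : pt -> Prop) :
  (exists y, A y) -> (forall y, A y -> 0 <= f y) ->
  exists L (z : nat -> pt), (forall y, A y -> L <= f y) /\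
    forall n, A (z n) /\ f (z n) < L + / INR (S n).
Proof.
  intros [y0 Hy0] Hf.
  set (E v := exists y, A y /\ v = - f y).
  destruct (completeness E) as [M [HM1 HM2]].
  - exists 0. intros v [y [Hy ->]]. specialize (Hf y Hy). lra.
  - exists (- f y0), y0; auto.
  - assert (Happ : forall n, exists y, A y /\ f y < - M + / INR (S n)).
    { intro n. apply NNPP; intro Hn.
      assert (Hub : is_upper_bound E (M - / INR (S n))).
      { intros v [y [Hy ->]]. apply Rnot_lt_le; intro Hlt. apply Hn; exists y; split; auto; lra. }
      specialize (HM2 _ Hub). pose proof (Rinv_0_lt_compat (INR (S n)) (lt_0_INR _ (Nat.lt_0_succ n))).
      lra. }
    exists (- M), (fun n => proj1_sig (constructive_indefinite_description _ (Happ n))). split.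
    + intros y Hy. assert (E (- f y)) by (exists y; auto). specialize (HM1 _ H). lra.
    + intro n. destruct (constructive_indefinite_description _ (Happ n)); auto.
Qed.

Lemma parallelogram d a b : dot d (vsub b a) (vsub b a) =
  2 * dot d a a + 2 * dot d b b - 4 * dot d (vscal (1/2) (vadd a b)) (vscal (1/2) (vadd a b)).
Proof.
  rewrite !dot_sub_l, !dot_sub_r, !dot_scal_l, !dot_scal_r, !dot_add_l, !dot_add_r, (dot_sym d a b).
  field.
Qed.

Definition is_nearest d (Om : pt -> Prop) (x X : pt) : Prop :=
  closure d Om X /\ forall z, Om z -> norm d (vsub x X) <= norm d (vsub x z).

Lemma not_closure_ball d (A : pt -> Prop) x : in_Rd d x -> ~ closure d A x ->
  exists e, e > 0 /\ forall y, norm d (vsub y x) < e -> ~ closure d A y.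
Proof.
  intros Hx Hncl.
  assert (Hsep : exists e, e > 0 /\ forall z, A z -> norm d (vsub z x) >= e).
  { apply NNPP; intro Hn. apply Hncl; split; auto. intros eps Heps.
    apply NNPP; intro Hno. apply Hn; exists eps; split; auto. intros z Hz.
    apply Rnot_lt_ge; intro Hlt. apply Hno; exists z; auto. }
  destruct Hsep as [e [He Hsep]]. exists (e / 2); split; [lra |].
  intros y Hy [_ Happ]. destruct (Happ (e / 2)) as [z [Hz Hzy]]; [lra |].
  specialize (Hsep z Hz). pose proof (norm_sub_triangle d z y x). lra.
Qed.

Lemma ext_out (Om : pt -> Prop) h0 u x : ~ Om x -> ext Om h0 u x = u x.
Proof. intro H. unfold ext. destruct (excluded_middle_informative (Om x)); tauto. Qed.

Lemma ext_in (Om : pt -> Prop) h0 u x : Om x -> ext Om h0 u x = h0.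
Proof. intro H. unfold ext. destruct (excluded_middle_informative (Om x)); tauto. Qed.
(** * Convex domains with C^1 boundary *)

Section ConvexC1Domain.

Variables (d : nat) (Om : pt -> Prop) (nu : pt -> pt).
Hypothesis Om_in_Rd : forall x, Om x -> in_Rd d x.
Hypothesis Om_open : open_Rd d Om.
Hypothesis Om_convex : convex_set d Om.
Hypothesis Om_C1 : C1_domain_inner_normal d Om nu.

Lemma closure_of_in x : Om x -> closure d Om x.
Proof. intro Hx; split; auto. intros eps Heps; exists x; rewrite norm_sub_diag; auto. Qed.

Lemma bdry_not_in X : bdry d Om X -> ~ Om X.
Proof.
  intros [_ [_ Hout]] HX. destruct (Om_open X HX) as [_ [r [Hr Hball]]].
  destruct (Hout r Hr) as [z [[Hz Hnz] Hzd]]. apply Hnz, Hball; auto.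
Qed.

Lemma bdry_in_Rd X : bdry d Om X -> in_Rd d X.
Proof. intros [[HX _] _]; exact HX. Qed.

(* Replace X by a nearby point of Om and compensate by moving y inside its ball. *)
Lemma segment_from_closure X y s : closure d Om X -> Om y -> 0 < s <= 1 ->
  Om (vadd X (vscal s (vsub y X))).
Proof.
  intros [HX Happ] Hy Hs.
  destruct (Om_open y Hy) as [Hiy [r [Hr Hball]]].
  destruct (Happ (r * s)) as [x' [Hx' Hd]]; [nra |].
  set (y' := vadd y (vscal ((1 - s) / s) (vsub X x'))).
  assert (Hy' : Om y').
  { apply Hball.
    - apply in_Rd_add, in_Rd_scal, in_Rd_sub; auto.
    - replace (vsub y' y) with (vscal ((1 - s) / s) (vsub X x')) by (unfold y'; vec_ring).
      rewrite norm_scal, norm_sub_sym, Rabs_pos_eq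
        by (apply Rmult_le_pos; [lra | left; apply Rinv_0_lt_compat; lra]).
      apply Rle_lt_trans with ((1 - s) / s * (r * s)).
      + apply Rmult_le_compat_l; [apply Rmult_le_pos; [lra | left; apply Rinv_0_lt_compat; lra] | lra].
      + replace ((1 - s) / s * (r * s)) with ((1 - s) * r) by (field; lra). nra. }
  replace (vadd X (vscal s (vsub y X))) with (vadd (vscal s y') (vscal (1 - s) x')).
  - apply Om_convex; auto; lra.
  - apply functional_extensionality; intro i; unfold y', vsub, vadd, vscal; field; lra.
Qed.

Lemma inner_normal_unit X : bdry d Om X -> in_Rd d (nu X) /\ norm d (nu X) = 1.
Proof.
  intro HX. destruct (Om_C1 X HX) as [r [rho [G [Hr [HG [Hiff [HGn [Hin Hveq]]]]]]]].
  split; auto. unfold norm.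
  rewrite (dot_veq_l _ _ _ _ Hveq), dot_sym, (dot_veq_l _ _ _ _ Hveq), dot_scal_l, dot_scal_r,
    <- norm_sq.
  replace (- / norm d (G X) * (- / norm d (G X) * (norm d (G X) * norm d (G X)))) with 1
    by (field; auto).
  apply sqrt_1.
Qed.

(* rho X = 0: X is not in Om but is a limit of points where rho < 0. *)
Lemma bdry_local_gradient X : bdry d Om X ->
  exists r rho G, r > 0 /\ has_grad d rho G X /\ rho X = 0 /\
    (forall x, in_Rd d x -> norm d (vsub x X) < r -> (Om x <-> rho x < 0)) /\
    norm d G > 0 /\ (forall w, dot d (nu X) w = - / norm d G * dot d G w).
Proof.
  intro HX. pose proof (bdry_in_Rd X HX) as HXi.
  destruct (Om_C1 X HX) as [r [rho [G [Hr [HG [Hiff [HGn [Hin Hveq]]]]]]]].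
  assert (Hgrad : has_grad d rho (G X) X) by (apply (HG X HXi); rewrite norm_sub_diag; lra).
  exists r, rho, (G X). do 2 (split; auto).
  split; [| split; [auto | split]].
  - destruct (Rle_or_lt (rho X) 0) as [Hle | Hpos].
    + destruct (Rle_or_lt 0 (rho X)) as [Hge | Hneg]; [lra | exfalso].
      apply (bdry_not_in X HX), Hiff; auto. rewrite norm_sub_diag; lra.
    + exfalso. destruct (has_grad_continuous _ _ _ _ Hgrad (rho X) Hpos) as [e [He Hcont]].
      destruct HX as [[_ Happ] _].
      destruct (Happ (Rmin e r) ltac:(apply Rmin_pos; lra)) as [y [Hy Hyd]].
      pose proof (Rmin_l e r); pose proof (Rmin_r e r).
      assert (rho y < 0) by (apply (Hiff y); auto; lra).
      specialize (Hcont y (Om_in_Rd y Hy) ltac:(lra)).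
      pose proof (Rle_abs (- (rho y - rho X))). rewrite Rabs_Ropp in H2. lra.
  - pose proof (norm_nonneg d (G X)); lra.
  - intro w. rewrite (dot_veq_l _ _ _ _ Hveq), dot_scal_l; auto.
Qed.

Lemma inner_normal_supports X y : bdry d Om X -> Om y -> dot d (nu X) (vsub y X) >= 0.
Proof.
  intros HX Hy. pose proof (bdry_in_Rd X HX) as HXi.
  destruct (Rlt_or_le (dot d (nu X) (vsub y X)) 0) as [Hneg |]; [exfalso | lra].
  destruct (bdry_local_gradient X HX) as [r [rho [G [Hr [Hgrad [H0 [Hiff [HGn Hnu]]]]]]]].
  set (w := vsub y X) in *.
  assert (HGw : dot d G w > 0).
  { rewrite Hnu in Hneg. pose proof (Rinv_0_lt_compat _ HGn). nra. }
  destruct (has_grad_step d rho G X w r Hgrad HXi ltac:(apply in_Rd_sub; auto) ltac:(lra) Hr)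
    as [s [Hs [Hsr Hstep]]].
  assert (Hp : Om (vadd X (vscal s w))) by (apply segment_from_closure; auto; apply HX).
  assert (Hpv : vsub (vadd X (vscal s w)) X = vscal s w) by vec_ring.
  assert (rho (vadd X (vscal s w)) < 0).
  { apply Hiff; auto. rewrite Hpv, norm_scal, Rabs_pos_eq; lra. }
  rewrite (Rabs_pos_eq (dot d G w)) in Hstep by lra.
  pose proof (Rle_abs (- (rho (vadd X (vscal s w)) - rho X - s * dot d G w))).
  rewrite Rabs_Ropp in H1. nra.
Qed.

Lemma inner_normal_supports_closure X z : bdry d Om X -> closure d Om z ->
  dot d (nu X) (vsub z X) >= 0.
Proof.
  intros HX [Hz Happ].
  destruct (Rlt_or_le (dot d (nu X) (vsub z X)) 0) as [Hneg |]; [exfalso | lra].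
  destruct (Happ (- dot d (nu X) (vsub z X))) as [y [Hy Hyd]]; [lra |].
  pose proof (inner_normal_supports X y HX Hy).
  replace (vsub z X) with (vadd (vsub y X) (vsub z y)) in * by vec_ring.
  rewrite dot_add_r in *. pose proof (dot_ge_neg_norm d (nu X) (vsub z y)).
  rewrite (proj2 (inner_normal_unit X HX)), norm_sub_sym in H0. lra.
Qed.

Lemma inner_directions_enter X v : bdry d Om X -> in_Rd d v -> dot d (nu X) v > 0 ->
  exists s, s > 0 /\ Om (vadd X (vscal s v)).
Proof.
  intros HX Hv Hnv. pose proof (bdry_in_Rd X HX) as HXi.
  destruct (bdry_local_gradient X HX) as [r [rho [G [Hr [Hgrad [H0 [Hiff [HGn Hnu]]]]]]]].
  assert (HGv : dot d G v < 0).
  { rewrite Hnu in Hnv. pose proof (Rinv_0_lt_compat _ HGn). nra. }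
  destruct (has_grad_step d rho G X v r Hgrad HXi Hv ltac:(lra) Hr) as [s [Hs [Hsr Hstep]]].
  exists s; split; [lra |].
  assert (Hpv : vsub (vadd X (vscal s v)) X = vscal s v) by vec_ring.
  apply Hiff.
  - apply in_Rd_add, in_Rd_scal; auto.
  - rewrite Hpv, norm_scal, Rabs_pos_eq; lra.
  - rewrite (Rabs_left (dot d G v)) in Hstep by lra.
    pose proof (Rle_abs (rho (vadd X (vscal s v)) - rho X - s * dot d G v)). nra.
Qed.

(* Parallelogram law: the midpoint of two almost minimizers is in Om, so they are close. *)
Lemma minimizing_sequence_cauchy x L (z : nat -> pt) :
  (forall y, Om y -> L <= dot d (vsub x y) (vsub x y)) ->
  (forall n, Om (z n) /\ dot d (vsub x (z n)) (vsub x (z n)) < L + / INR (S n)) ->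
  forall n m, (n <= m)%nat -> norm d (vsub (z n) (z m)) <= 2 * sqrt (/ INR (S n)).
Proof.
  intros HL Hz n m Hnm.
  assert (Hmid : Om (vadd (vscal (1/2) (z n)) (vscal (1 - 1/2) (z m))))
    by (apply Om_convex; [apply Hz | apply Hz | lra]).
  specialize (HL _ Hmid).
  assert (Hsq : dot d (vsub (z n) (z m)) (vsub (z n) (z m)) <= 4 * / INR (S n)).
  { replace (vsub (z n) (z m)) with (vsub (vsub x (z m)) (vsub x (z n))) by vec_ring.
    rewrite parallelogram.
    replace (vscal (1/2) (vadd (vsub x (z n)) (vsub x (z m))))
      with (vsub x (vadd (vscal (1/2) (z n)) (vscal (1 - 1/2) (z m))))
      by (apply functional_extensionality; intro; unfold vsub, vadd, vscal; field).
    destruct (Hz n) as [_ Hn]; destruct (Hz m) as [_ Hm].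
    assert (/ INR (S m) <= / INR (S n))
      by (apply Rinv_le_contravar; [apply lt_0_INR; lia | apply le_INR; lia]).
    lra. }
  assert (Hinv : 0 < / INR (S n)) by (apply Rinv_0_lt_compat, lt_0_INR; lia).
  pose proof (sqrt_pos (/ INR (S n))).
  apply Rsqr_le_nonneg; [lra |].
  rewrite norm_sq. replace (2 * sqrt (/ INR (S n)) * (2 * sqrt (/ INR (S n))))
    with (4 * (sqrt (/ INR (S n)) * sqrt (/ INR (S n)))) by ring.
  rewrite sqrt_sqrt by lra. exact Hsq.
Qed.

Lemma nearest_point_exists x : (exists y, Om y) -> in_Rd d x -> exists X, is_nearest d Om x X.
Proof.
  intros Hne Hx.
  set (D w := dot d (vsub x w) (vsub x w)).
  destruct (minimizing_sequence D Om Hne (fun w _ => dot_self_nonneg d (vsub x w)))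
    as [L [z [HL Hz]]].
  destruct (cauchy_pt_limit d z 2 (fun n => Om_in_Rd _ (proj1 (Hz n)))
              (minimizing_sequence_cauchy x L z HL Hz)) as [X [HXi HXz]].
  set (t n := sqrt (/ INR (S n))) in *.
  set (C := sqrt (INR d) * 2) in *.
  assert (HC : C >= 0) by (pose proof (sqrt_pos (INR d)); unfold C; lra).
  assert (Hzw : forall n w, Om w -> norm d (vsub x (z n)) <= norm d (vsub x w) + t n).
  { intros n w Hw. pose proof (norm_nonneg d (vsub x w)). pose proof (sqrt_pos (/ INR (S n))).
    assert (Ht2 : t n * t n = / INR (S n))
      by (apply sqrt_sqrt; left; apply Rinv_0_lt_compat, lt_0_INR; lia).
    apply Rsqr_le_nonneg; [unfold t in *; lra |].
    rewrite norm_sq. destruct (Hz n) as [_ Hn]. specialize (HL w Hw). unfold D in *.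
    rewrite <- norm_sq in HL. unfold t in *. nra. }
  exists X; split.
  - split; auto. intros eps Heps.
    destruct (exists_inv_sqrt_lt C eps HC Heps) as [n Hn].
    exists (z n); split; [apply Hz |].
    specialize (HXz n). unfold t in *; lra.
  - intros w Hw. apply le_of_forall_pos_lt; intros eps Heps.
    destruct (exists_inv_sqrt_lt (C + 1) eps ltac:(lra) Heps) as [n Hn].
    pose proof (norm_sub_triangle d x (z n) X). specialize (HXz n).
    specialize (Hzw n w Hw). unfold t in *. lra.
Qed.

Lemma nearest_dist_pos x X : in_Rd d x -> ~ closure d Om x -> is_nearest d Om x X ->
  norm d (vsub x X) > 0.
Proof.
  intros Hx Hncl [[HXi HXapp] _].
  destruct (Rlt_or_le 0 (norm d (vsub x X))) as [| Hle]; auto. exfalso. apply Hncl.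
  split; auto. intros eps Heps. destruct (HXapp eps Heps) as [y [Hy Hyd]].
  exists y; split; auto.
  pose proof (norm_sub_triangle d y X x). pose proof (norm_nonneg d (vsub x X)).
  rewrite (norm_sub_sym d X x) in H. lra.
Qed.

(* Test minimality on the segment from X towards z, which lies in Om. *)
Lemma nearest_variational x X z : is_nearest d Om x X -> Om z ->
  dot d (vsub x X) (vsub z X) <= 0.
Proof.
  intros [HXc HXm] Hz. set (a := vsub x X); set (w := vsub z X).
  destruct (Rle_or_lt (dot d a w) 0) as [| Hpos]; auto. exfalso.
  pose proof (dot_self_nonneg d w).
  set (s := Rmin 1 (dot d a w / (dot d w w + 1))).
  assert (Hs : 0 < s <= 1).
  { split; [apply Rmin_pos; [lra | apply Rdiv_lt_0_compat; lra] | apply Rmin_l]. }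
  assert (Hsw : s * (dot d w w + 1) <= dot d a w).
  { pose proof (Rmin_r 1 (dot d a w / (dot d w w + 1))).
    assert (dot d a w / (dot d w w + 1) * (dot d w w + 1) = dot d a w) by (field; lra).
    fold s in H0. nra. }
  specialize (HXm _ (segment_from_closure X z s HXc Hz Hs)).
  replace (vsub x (vadd X (vscal s (vsub z X)))) with (vsub a (vscal s w)) in HXm
    by (unfold a, w; vec_ring).
  assert (Hq : norm d a * norm d a <= norm d (vsub a (vscal s w)) * norm d (vsub a (vscal s w))).
  { pose proof (norm_nonneg d a). apply Rmult_le_compat; auto. }
  rewrite !norm_sq, dot_sub_l, !dot_sub_r, !dot_scal_l, !dot_scal_r, (dot_sym d w a) in Hq.
  nra.
Qed.

Lemma nearest_in_bdry x X : in_Rd d x -> is_nearest d Om x X -> norm d (vsub x X) > 0 ->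
  bdry d Om X.
Proof.
  intros Hx [HXc HXm] Hpos. pose proof (proj1 HXc) as HXi. set (a := vsub x X) in *.
  split; [auto | split; [auto |]]. intros eps Heps.
  destruct (exists_small_scale eps (norm d a) Heps ltac:(lra)) as [s [Hs Hsa]].
  exists (vadd X (vscal (s / 2) a)). split; [split |].
  - apply in_Rd_add, in_Rd_scal, in_Rd_sub; auto.
  - intro Hy. specialize (HXm _ Hy).
    replace (vsub x (vadd X (vscal (s / 2) a))) with (vscal (1 - s / 2) a) in HXm
      by (unfold a; vec_ring).
    rewrite norm_scal, Rabs_pos_eq in HXm by lra. nra.
  - replace (vsub (vadd X (vscal (s / 2) a)) X) with (vscal (s / 2) a) by vec_ring.
    rewrite norm_scal, Rabs_pos_eq by lra. nra.
Qed.

(* Both -nu X and (x - X)/|x - X| are unit vectors, and every direction entering Om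
   makes an obtuse angle with x - X. *)
Lemma nearest_inner_normal x X : in_Rd d x -> is_nearest d Om x X -> norm d (vsub x X) > 0 ->
  nu X = vscal (- / norm d (vsub x X)) (vsub x X).
Proof.
  intros Hx HXn Hpos.
  pose proof (nearest_in_bdry x X Hx HXn Hpos) as HXb.
  pose proof (bdry_in_Rd X HXb) as HXi.
  destruct (inner_normal_unit X HXb) as [Hnui Hnu1].
  set (a := vsub x X) in *. set (del := norm d a) in *.
  assert (Hunit : forall v, norm d v = 1 -> dot d v v = 1)
    by (intros v Hv; rewrite <- norm_sq, Hv; ring).
  assert (Hu : forall w, dot d (vscal (/ del) a) w = dot d (vscal (-1) (nu X)) w).
  { apply unit_dot_eq_of_halfspace.
    - apply in_Rd_scal, in_Rd_sub; auto.
    - apply in_Rd_scal; auto.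
    - apply Hunit. rewrite norm_scal, Rabs_pos_eq by (left; apply Rinv_0_lt_compat; lra).
      fold del; field; lra.
    - apply Hunit. rewrite norm_scal, Hnu1, Rabs_left by lra; ring.
    - intros v Hv Hgv. rewrite dot_scal_l in Hgv.
      destruct (inner_directions_enter X v HXb Hv ltac:(lra)) as [s [Hs Hp]].
      pose proof (nearest_variational x X _ HXn Hp) as Hvar.
      replace (vsub (vadd X (vscal s v)) X) with (vscal s v) in Hvar by vec_ring.
      rewrite dot_scal_r in Hvar. rewrite dot_scal_l.
      pose proof (Rinv_0_lt_compat _ Hpos). fold a in Hvar. nra. }
  apply (veq_in_Rd_eq d); [auto | apply in_Rd_scal, in_Rd_sub; auto |].
  apply veq_of_dot_eq; intro w'. specialize (Hu w'). rewrite !dot_scal_l in *. lra.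
Qed.

(** * The lower envelope *)

Section LowerEnvelope.

Variables (h0 lam0 : R) (hs : pt -> R).
Hypothesis Om_nonempty : exists x, Om x.
Hypothesis lam0_pos : lam0 > 0.
Hypothesis hs_inf : forall x, in_Rd d x ->
  is_inf (fun v => exists X, bdry d Om X /\ v = h0 + lam0 * dot d (nu X) (vsub x X)) (hs x).

Lemma hs_le_affine x X : in_Rd d x -> bdry d Om X ->
  hs x <= h0 + lam0 * dot d (nu X) (vsub x X).
Proof. intros Hx HX. apply (proj1 (hs_inf x Hx)). exists X; auto. Qed.

(* Each affine function is >= h0 on Om and has slope lam0. *)
Lemma hs_ge_dist x z : in_Rd d x -> closure d Om z -> hs x >= h0 - lam0 * norm d (vsub x z).
Proof.
  intros Hx Hz. apply Rle_ge, (proj2 (hs_inf x Hx)). intros v [X [HX ->]].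
  replace (vsub x X) with (vadd (vsub x z) (vsub z X)) by vec_ring.
  rewrite dot_add_r. pose proof (inner_normal_supports_closure X z HX Hz).
  pose proof (dot_ge_neg_norm d (nu X) (vsub x z)).
  rewrite (proj2 (inner_normal_unit X HX)) in H0. nra.
Qed.

Lemma hs_lipschitz x y : in_Rd d x -> in_Rd d y -> hs y <= hs x + lam0 * norm d (vsub y x).
Proof.
  intros Hx Hy.
  enough (hs y - lam0 * norm d (vsub y x) <= hs x) by lra.
  apply (proj2 (hs_inf x Hx)). intros v [X [HX ->]].
  pose proof (hs_le_affine y X Hy HX).
  replace (vsub y X) with (vadd (vsub x X) (vsub y x)) in H by vec_ring.
  rewrite dot_add_r in H. pose proof (dot_le_norm d (nu X) (vsub y x)).
  rewrite (proj2 (inner_normal_unit X HX)) in H0. nra.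
Qed.

Lemma hs_bdry X : bdry d Om X -> hs X = h0.
Proof.
  intro HX. pose proof (bdry_in_Rd X HX) as HXi.
  pose proof (hs_le_affine X X HXi HX). rewrite dot_sub_diag_r in H.
  pose proof (hs_ge_dist X X HXi (proj1 HX)). rewrite norm_sub_diag in H0. lra.
Qed.

(* On the ray from the nearest point X through x, the affine function of X and
   the distance bound through X agree. *)
Lemma hs_nearest_ray x X c : in_Rd d x -> ~ closure d Om x -> is_nearest d Om x X -> c >= 0 ->
  hs (vadd X (vscal c (vsub x X))) = h0 - lam0 * (c * norm d (vsub x X)).
Proof.
  intros Hx Hncl HXn Hc.
  pose proof (nearest_dist_pos x X Hx Hncl HXn) as Hpos.
  pose proof (nearest_in_bdry x X Hx HXn Hpos) as HXb.
  pose proof (bdry_in_Rd X HXb) as HXi.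
  set (y := vadd X (vscal c (vsub x X))).
  assert (Hyi : in_Rd d y) by (apply in_Rd_add, in_Rd_scal, in_Rd_sub; auto).
  assert (HyX : vsub y X = vscal c (vsub x X)) by (unfold y; vec_ring).
  pose proof (hs_le_affine y X Hyi HXb) as Hup.
  rewrite (nearest_inner_normal x X Hx HXn Hpos), HyX, dot_scal_l, dot_scal_r, <- norm_sq in Hup.
  replace (- / norm d (vsub x X) * (c * (norm d (vsub x X) * norm d (vsub x X))))
    with (- (c * norm d (vsub x X))) in Hup by (field; lra).
  pose proof (hs_ge_dist y X Hyi (proj1 HXb)) as Hlo.
  rewrite HyX, norm_scal, Rabs_pos_eq in Hlo by lra. lra.
Qed.

Lemma hs_nearest x X : in_Rd d x -> ~ closure d Om x -> is_nearest d Om x X ->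
  hs x = h0 - lam0 * norm d (vsub x X).
Proof.
  intros Hx Hncl HXn. pose proof (hs_nearest_ray x X 1 Hx Hncl HXn ltac:(lra)).
  replace (vadd X (vscal 1 (vsub x X))) with x in H by vec_ring. lra.
Qed.

Lemma ext_le x : in_Rd d x -> ext Om h0 hs x <= hs x /\ ext Om h0 hs x <= h0.
Proof.
  intro Hx. destruct (classic (Om x)) as [Ho | Ho].
  - rewrite ext_in by auto. split; [| lra].
    pose proof (hs_ge_dist x x Hx (closure_of_in x Ho)). rewrite norm_sub_diag in H. lra.
  - rewrite ext_out by auto. split; [lra |].
    destruct (classic (closure d Om x)) as [Hc | Hc].
    + rewrite <- (hs_bdry x); [lra |]. split; [auto | split; [auto |]].
      intros eps Heps. exists x. rewrite norm_sub_diag. auto.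
    + destruct (nearest_point_exists x Om_nonempty Hx) as [X HXn].
      rewrite (hs_nearest x X Hx Hc HXn). pose proof (nearest_dist_pos x X Hx Hc HXn). nra.
Qed.

(* hs is an infimum of affine functions, hence concave, and the extension only
   replaces values by the larger value h0 on Om. *)
Lemma ext_concave : concave_on_Rd d (ext Om h0 hs).
Proof.
  intros x y t Hx Hy Ht.
  set (p := vadd (vscal t x) (vscal (1 - t) y)).
  assert (Hp : in_Rd d p) by (apply in_Rd_add; apply in_Rd_scal; auto).
  destruct (ext_le x Hx) as [Ex1 Ex2]; destruct (ext_le y Hy) as [Ey1 Ey2].
  assert (Hcc : hs p >= t * hs x + (1 - t) * hs y).
  { apply Rle_ge, (proj2 (hs_inf p Hp)). intros v [X [HX ->]].
    replace (vsub p X) with (vadd (vscal t (vsub x X)) (vscal (1 - t) (vsub y X))) by (unfold p; vec_ring).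
    rewrite dot_add_r, !dot_scal_r.
    pose proof (hs_le_affine x X Hx HX); pose proof (hs_le_affine y X Hy HX). nra. }
  fold p. destruct (classic (Om p)) as [Ho | Ho];
    [rewrite ext_in by auto | rewrite ext_out by auto]; nra.
Qed.

Lemma hs_zero_on_Gamma x0 : Gamma d Om h0 hs x0 -> hs x0 = 0.
Proof.
  intros [[[Hx0 Hin] [_ Hout]] Hncl].
  destruct (not_closure_ball d Om x0 Hx0 Hncl) as [e [He Hball]].
  assert (Hhs : forall y, norm d (vsub y x0) < e -> ext Om h0 hs y = hs y)
    by (intros y Hy; apply ext_out; intro Ho; apply (Hball y Hy), closure_of_in; auto).
  destruct (Rtotal_order (hs x0) 0) as [Hneg | [Hz | Hpos]]; auto; exfalso.
  - destruct (Hin (Rmin e (- hs x0 / lam0))) as [y [[Hy Hypos] Hyd]].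
    { apply Rmin_pos; [lra | apply Rdiv_lt_0_compat; lra]. }
    pose proof (Rmin_l e (- hs x0 / lam0)); pose proof (Rmin_r e (- hs x0 / lam0)).
    rewrite Hhs in Hypos by lra.
    pose proof (hs_lipschitz x0 y Hx0 Hy).
    assert (- hs x0 / lam0 * lam0 = - hs x0) by (field; lra). nra.
  - destruct (Hout (Rmin e (hs x0 / lam0))) as [y [[Hy Hynpos] Hyd]].
    { apply Rmin_pos; [lra | apply Rdiv_lt_0_compat; lra]. }
    pose proof (Rmin_l e (hs x0 / lam0)); pose proof (Rmin_r e (hs x0 / lam0)).
    apply Hynpos; split; auto. rewrite Hhs by lra.
    pose proof (hs_lipschitz y x0 Hy Hx0). rewrite norm_sub_sym in H1.
    assert (hs x0 / lam0 * lam0 = hs x0) by (field; lra). nra.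
Qed.

(* At x0 in Gamma the inner normal of {u > 0} is nu X for the nearest point X of x0,
   and u grows exactly linearly along it: x0 is at distance h0 / lam0 from Om. *)
Lemma Gamma_normal_slope x0 nu0 : Gamma d Om h0 hs x0 ->
  supp_normal d (pos_set d Om h0 hs) x0 nu0 ->
  (forall n, supp_normal d (pos_set d Om h0 hs) x0 n -> veq d n nu0) ->
  exists delta, delta > 0 /\
    forall t, 0 < t < delta -> ext Om h0 hs (vadd x0 (vscal t nu0)) = lam0 * t.
Proof.
  intros HG Hsn Huniq. pose proof (hs_zero_on_Gamma x0 HG) as Hz.
  destruct HG as [[[Hx0 _] _] Hncl].
  destruct (nearest_point_exists x0 Om_nonempty Hx0) as [X HXn].
  pose proof (nearest_dist_pos x0 X Hx0 Hncl HXn) as Hpos.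
  pose proof (nearest_in_bdry x0 X Hx0 HXn Hpos) as HXb.
  pose proof (nearest_inner_normal x0 X Hx0 HXn Hpos) as Hnu.
  destruct (inner_normal_unit X HXb) as [Hnui Hnu1].
  set (a := vsub x0 X) in *; set (del := norm d a) in *.
  assert (Hh0 : h0 = lam0 * del) by (rewrite (hs_nearest x0 X) in Hz by auto; fold a del in Hz; lra).
  assert (Hna : dot d (nu X) a = - del)
    by (rewrite Hnu, dot_scal_l, <- norm_sq; fold del; field; lra).
  assert (Hsupp : supp_normal d (pos_set d Om h0 hs) x0 (nu X)).
  { split; [auto | split; [auto |]]. intros y [Hy Hypos].
    replace (vsub y x0) with (vsub (vsub y X) a) by (unfold a; vec_ring).
    rewrite dot_sub_r, Hna.
    destruct (classic (Om y)) as [Ho | Ho].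
    - pose proof (inner_normal_supports X y HXb Ho). lra.
    - rewrite ext_out in Hypos by auto. pose proof (hs_le_affine y X Hy HXb). nra. }
  assert (Hnu0 : nu0 = nu X).
  { symmetry; apply (veq_in_Rd_eq d); [auto | apply Hsn | apply Huniq; auto]. }
  subst nu0. exists del; split; [lra |]. intros t Ht.
  assert (Hc : 1 - t / del > 0).
  { assert (t / del < 1) by (apply (Rmult_lt_reg_r del); [lra | field_simplify; lra]). lra. }
  replace (vadd x0 (vscal t (nu X))) with (vadd X (vscal (1 - t / del) a))
    by (rewrite Hnu; unfold a; apply functional_extensionality; intro;
        unfold vsub, vadd, vscal; fold del; field; lra).
  rewrite ext_out.
  - rewrite (hs_nearest_ray x0 X) by (auto; lra). fold a del. rewrite Hh0. field. lra.
  - intro Ho. pose proof (inner_normal_supports X _ HXb Ho) as Hs.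
    replace (vsub (vadd X (vscal (1 - t / del) a)) X) with (vscal (1 - t / del) a) in Hs by vec_ring.
    rewrite dot_scal_r, Hna in Hs. nra.
Qed.

Section Subgradient.

Variables (x p : pt).
Hypothesis x_free : free_region d Om h0 hs x.
Hypothesis p_subgrad : subgrad d (fun y => - ext Om h0 hs y) (free_region d Om h0 hs) x p.

(* Lowering u along the segment from x to its nearest point: u drops at rate lam0. *)
Lemma subgrad_norm_ge : norm d p >= lam0.
Proof.
  destruct x_free as [[Hx Hxpos] Hncl]. destruct p_subgrad as [Hpi Hsg].
  assert (HxO : ~ Om x) by (intro Ho; apply Hncl, closure_of_in; auto).
  rewrite ext_out in Hxpos by auto.
  destruct (nearest_point_exists x Om_nonempty Hx) as [X HXn].
  pose proof (nearest_dist_pos x X Hx Hncl HXn) as Hpos.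
  pose proof (bdry_in_Rd X (nearest_in_bdry x X Hx HXn Hpos)) as HXi.
  destruct (not_closure_ball d Om x Hx Hncl) as [e [He Hball]].
  set (a := vsub x X) in *; set (del := norm d a) in *.
  set (s := Rmin del e / 2).
  assert (Hs : 0 < s < del /\ s < e)
    by (pose proof (Rmin_l del e); pose proof (Rmin_r del e); pose proof (Rmin_pos del e); unfold s; lra).
  set (y := vadd X (vscal (1 - s / del) a)).
  assert (Hyx : vsub y x = vscal (- (s / del)) a)
    by (unfold y, a; apply functional_extensionality; intro; unfold vsub, vadd, vscal; field; lra).
  assert (Hyi : in_Rd d y) by (unfold y; apply in_Rd_add, in_Rd_scal, in_Rd_sub; auto).
  assert (Hync : ~ closure d Om y).
  { apply Hball. rewrite Hyx, norm_scal, Rabs_Ropp, Rabs_pos_eq by (apply Rlt_le, Rdiv_lt_0_compat; lra).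
    fold del. field_simplify; lra. }
  assert (HyO : ~ Om y) by (intro Ho; apply Hync, closure_of_in; auto).
  assert (Hc : 1 - s / del >= 0).
  { assert (s / del < 1) by (apply (Rmult_lt_reg_r del); [lra | field_simplify; lra]). lra. }
  assert (Hhy : hs y = hs x + lam0 * s).
  { unfold y. rewrite (hs_nearest_ray x X), (hs_nearest x X) by auto.
    fold a del. field. lra. }
  assert (Hyfree : free_region d Om h0 hs y)
    by (split; [split; [auto | rewrite ext_out by auto; nra] | auto]).
  specialize (Hsg y Hyfree). rewrite !ext_out, Hyx, dot_scal_r in Hsg by auto.
  assert (Hpa : s / del * dot d p a >= lam0 * s) by lra.
  assert (dot d p a >= lam0 * del).
  { apply Rle_ge, (Rmult_le_reg_l (s / del)); [apply Rdiv_lt_0_compat; lra |].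
    replace (s / del * (lam0 * del)) with (lam0 * s) by (field; lra). lra. }
  pose proof (dot_le_norm d p a). fold del in H0. nra.
Qed.

(* Moving from x in the direction of p: u cannot drop faster than lam0. *)
Lemma subgrad_norm_le : norm d p <= lam0.
Proof.
  destruct x_free as [[Hx Hxpos] Hncl]. destruct p_subgrad as [Hpi Hsg].
  assert (HxO : ~ Om x) by (intro Ho; apply Hncl, closure_of_in; auto).
  rewrite ext_out in Hxpos by auto.
  destruct (Rle_or_lt (norm d p) 0) as [| Hp]; [lra |].
  destruct (not_closure_ball d Om x Hx Hncl) as [e [He Hball]].
  set (s := Rmin e (hs x / lam0) / 2).
  assert (Hs : 0 < s < e /\ lam0 * s < hs x).
  { pose proof (Rmin_l e (hs x / lam0)); pose proof (Rmin_r e (hs x / lam0)).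
    pose proof (Rmin_pos e (hs x / lam0) He ltac:(apply Rdiv_lt_0_compat; lra)).
    assert (hs x / lam0 * lam0 = hs x) by (field; lra). unfold s; nra. }
  set (y := vadd x (vscal (s / norm d p) p)).
  assert (Hyx : vsub y x = vscal (s / norm d p) p) by (unfold y; vec_ring).
  assert (Hyi : in_Rd d y) by (unfold y; apply in_Rd_add, in_Rd_scal; auto).
  assert (Hyxn : norm d (vsub y x) = s).
  { rewrite Hyx, norm_scal, Rabs_pos_eq by (apply Rlt_le, Rdiv_lt_0_compat; lra). field; lra. }
  assert (Hync : ~ closure d Om y) by (apply Hball; lra).
  assert (HyO : ~ Om y) by (intro Ho; apply Hync, closure_of_in; auto).
  pose proof (hs_lipschitz y x Hyi Hx) as Hlip. rewrite norm_sub_sym, Hyxn in Hlip.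
  assert (Hyfree : free_region d Om h0 hs y)
    by (split; [split; [auto | rewrite ext_out by auto; nra] | auto]).
  specialize (Hsg y Hyfree). rewrite !ext_out, Hyx, dot_scal_r, <- norm_sq in Hsg by auto.
  replace (s / norm d p * (norm d p * norm d p)) with (s * norm d p) in Hsg by (field; lra).
  nra.
Qed.

Lemma subgrad_on_sphere : dot d p p = lam0 * lam0.
Proof.
  pose proof subgrad_norm_ge; pose proof subgrad_norm_le.
  rewrite <- norm_sq. replace (norm d p) with lam0 by lra. ring.
Qed.

End Subgradient.

End LowerEnvelope.

End ConvexC1Domain.

(** * Spheres are null sets *)

Lemma box_vol_nonneg d a b : (forall i, (i < d)%nat -> a i <= b i) -> 0 <= box_vol d a b.
Proof.
  induction d; intro H; simpl; [lra |].
  apply Rmult_le_pos; [apply IHd; intros; apply H; lia | specialize (H d ltac:(lia)); lra].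
Qed.

Lemma box_vol_uniform d a b h : (forall i, (i < d)%nat -> b i - a i = h) -> box_vol d a b = h ^ d.
Proof.
  induction d; intro H; simpl; auto.
  rewrite IHd, H; [ring | lia |]. intros; apply H; lia.
Qed.

Lemma sum_f_R0_le_uniform (f : nat -> R) K V M : (forall k, 0 <= f k) ->
  (forall k, (K <= k)%nat -> f k = 0) -> (forall k, (k < K)%nat -> f k <= V) ->
  sum_f_R0 f M <= INR K * V.
Proof.
  intros H0 HK HV. destruct K as [| K].
  - replace (sum_f_R0 f M) with 0; [simpl; lra |].
    induction M; simpl; rewrite HK by lia; [| rewrite <- IHM]; ring.
  - assert (HV0 : 0 <= V) by (specialize (H0 0%nat); specialize (HV 0%nat ltac:(lia)); lra).
    assert (Hmin : forall M, sum_f_R0 f M <= INR (Nat.min (S M) (S K)) * V).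
    { induction M0; simpl sum_f_R0.
      - simpl. specialize (HV 0%nat ltac:(lia)). lra.
      - destruct (Nat.le_gt_cases (S K) (S M0)).
        + rewrite HK by lia. rewrite (Nat.min_r (S (S M0))) by lia.
          rewrite (Nat.min_r (S M0)) in IHM0 by lia. lra.
        + rewrite Nat.min_l by lia. rewrite Nat.min_l in IHM0 by lia.
          rewrite S_INR. specialize (HV (S M0) H). lra. }
    eapply Rle_trans; [apply Hmin |]. apply Rmult_le_compat_r; auto. apply le_INR; lia.
Qed.

(* Finitely many boxes of bounded volume suffice: the remaining boxes of the
   countable cover are taken degenerate, which needs d >= 1. *)
Lemma null_set_of_uniform_cover d (A : pt -> Prop) : (1 <= d)%nat ->
  (forall eps, eps > 0 -> exists (K : nat) V (a b : nat -> pt),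
     (forall k i, (k < K)%nat -> (i < d)%nat -> a k i <= b k i) /\
     (forall k, (k < K)%nat -> box_vol d (a k) (b k) <= V) /\
     (forall x, in_Rd d x -> A x ->
        exists k, (k < K)%nat /\ forall i, (i < d)%nat -> a k i <= x i <= b k i) /\
     INR K * V < eps) ->
  null_set d A.
Proof.
  intros Hd Hcov eps Heps.
  destruct (Hcov eps Heps) as [K [V [a [b [Hab [HV [HA HKV]]]]]]].
  set (a' k := if (k <? K)%nat then a k else fun _ => 0).
  set (b' k := if (k <? K)%nat then b k else fun _ => 0).
  assert (Hab' : forall k i, (i < d)%nat -> a' k i <= b' k i).
  { intros k i Hi. unfold a', b'. destruct (Nat.ltb_spec k K); [auto | lra]. }
  exists a', b'. split; [exact Hab' | split].
  - intros x Hx HAx. destruct (HA x Hx HAx) as [k [Hk Hin]]. exists k.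
    unfold a', b'. destruct (Nat.ltb_spec k K); [exact Hin | lia].
  - intro M. eapply Rle_lt_trans; [| exact HKV].
    apply sum_f_R0_le_uniform.
    + intro k. apply box_vol_nonneg. intros; apply Hab'; auto.
    + intros k Hk. unfold a', b'. destruct (Nat.ltb_spec k K); [lia |].
      destruct d; [lia |]. simpl. ring.
    + intros k Hk. unfold a', b'. destruct (Nat.ltb_spec k K); [auto | lia].
Qed.

Lemma null_set_mono d (A B : pt -> Prop) : null_set d A ->
  (forall p, in_Rd d p -> B p -> A p) -> null_set d B.
Proof.
  intros HA HBA eps Heps. destruct (HA eps Heps) as [a [b [H1 [H2 H3]]]].
  exists a, b; auto.
Qed.

(* Base-N digits enumerate the N^m cells of a grid in R^m. *)
Fixpoint digit (N k i : nat) : nat :=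
  match i with O => k mod N | S i' => digit N (k / N) i' end.

Lemma digit_exists N m (j : nat -> nat) : (0 < N)%nat -> (forall i, (i < m)%nat -> (j i < N)%nat) ->
  exists k, (k < N ^ m)%nat /\ forall i, (i < m)%nat -> digit N k i = j i.
Proof.
  revert j. induction m; intros j HN Hj.
  - exists 0%nat. simpl. split; [lia | intros; lia].
  - destruct (IHm (fun i => j (S i)) HN) as [k' [Hk' Hd]]; [intros; apply Hj; lia |].
    exists (j 0%nat + k' * N)%nat. split.
    + simpl. specialize (Hj 0%nat ltac:(lia)). nia.
    + intros [| i] Hi; simpl.
      * rewrite Nat.Div0.mod_add by lia. apply Nat.mod_small, Hj; lia.
      * rewrite Nat.div_add, Nat.div_small by (try apply Hj; lia). apply Hd; lia.
Qed.

Lemma cell_exists (N : nat) h y : (1 <= N)%nat -> h > 0 -> 0 <= y <= INR N * h ->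
  exists j, (j < N)%nat /\ INR j * h <= y <= (INR j + 1) * h.
Proof.
  induction N; intros HN Hh Hy; [lia |].
  destruct (Nat.eq_dec N 0) as [-> | HN0].
  - exists 0%nat. split; [lia |]. simpl in *. lra.
  - destruct (Rle_or_lt y (INR N * h)) as [Hle | Hlt].
    + destruct (IHN ltac:(lia) Hh ltac:(lra)) as [j [Hj Hj2]]. exists j; split; auto.
    + exists N. split; [lia |]. rewrite S_INR in Hy. lra.
Qed.

Lemma Rabs_le_inv a b : Rabs a <= b -> - b <= a <= b.
Proof. intro H. pose proof (Rle_abs a). pose proof (Rle_abs (- a)). rewrite Rabs_Ropp in H1. lra. Qed.

Lemma Rabs_sqrt_sub_le a b : Rabs (sqrt a - sqrt b) <= sqrt (Rabs (a - b)).
Proof.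
  assert (Hgen : forall a b, b <= a -> Rabs (sqrt a - sqrt b) <= sqrt (Rabs (a - b))).
  { intros x y Hxy. pose proof (sqrt_le_1_alt _ _ Hxy).
    rewrite !Rabs_pos_eq by lra.
    destruct (Rle_or_lt y 0) as [Hy | Hy].
    - rewrite (sqrt_neg_0 y Hy), Rminus_0_r. apply sqrt_le_1_alt. lra.
    - apply Rsqr_le_nonneg; [apply sqrt_pos |]. rewrite sqrt_sqrt by lra.
      pose proof (sqrt_sqrt x ltac:(lra)). pose proof (sqrt_sqrt y ltac:(lra)).
      pose proof (sqrt_pos y). nra. }
  destruct (Rle_or_lt b a); auto.
  rewrite <- Rabs_Ropp, (Rabs_minus_sym a b).
  replace (- (sqrt a - sqrt b)) with (sqrt b - sqrt a) by ring. apply Hgen; lra.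
Qed.

Lemma Rabs_dot_self_sub_le m u v c : (forall i, (i < m)%nat -> Rabs (u i * u i - v i * v i) <= c) ->
  Rabs (dot m u u - dot m v v) <= INR m * c.
Proof.
  induction m; intro H; simpl dot.
  - rewrite Rminus_0_r, Rabs_R0; simpl; lra.
  - rewrite S_INR.
    replace (dot m u u + u m * u m - (dot m v v + v m * v m))
      with ((dot m u u - dot m v v) + (u m * u m - v m * v m)) by ring.
    eapply Rle_trans; [apply Rabs_triang |].
    assert (Rabs (dot m u u - dot m v v) <= INR m * c) by (apply IHm; intros; apply H; lia).
    specialize (H m ltac:(lia)). lra.
Qed.

(* Over a grid cell of side h in the first m coordinates, each hemisphere
   p_m = +- sqrt (r^2 - |p'|^2) varies by at most sqrt (2 m r h), which gives
   2 N^m boxes of total volume 4 (2r)^m sqrt (2 m r h) with h = 2r/N. *)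
Definition grid_step (rad : R) (N : nat) : R := 2 * rad / INR N.
Definition cell_corner (N : nat) (rad : R) (c : nat) : pt :=
  fun i => - rad + INR (digit N c i) * grid_step rad N.
Definition cap_height (m N : nat) (rad : R) (c : nat) : R :=
  sqrt (rad * rad - dot m (cell_corner N rad c) (cell_corner N rad c)).
Definition cap_slack (m N : nat) (rad : R) : R := sqrt (INR m * (2 * rad * grid_step rad N)).
Definition cap_cell (m N k : nat) : nat := if (k <? N ^ m)%nat then k else (k - N ^ m)%nat.
Definition cap_sign (m N k : nat) : R := if (k <? N ^ m)%nat then 1 else -1.
Definition cap_box_lo (m N : nat) (rad : R) (k : nat) : pt := fun i =>
  if (i <? m)%nat then cell_corner N rad (cap_cell m N k) i
  else cap_sign m N k * cap_height m N rad (cap_cell m N k) - cap_slack m N rad.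
Definition cap_box_hi (m N : nat) (rad : R) (k : nat) : pt := fun i =>
  if (i <? m)%nat then cell_corner N rad (cap_cell m N k) i + grid_step rad N
  else cap_sign m N k * cap_height m N rad (cap_cell m N k) + cap_slack m N rad.

Section SphereCover.

Variables (m N : nat) (rad : R).
Hypothesis N_pos : (0 < N)%nat.
Hypothesis rad_pos : rad > 0.

Lemma grid_step_pos : grid_step rad N > 0.
Proof. apply Rdiv_lt_0_compat; [lra | apply lt_0_INR; auto]. Qed.

Lemma cap_box_valid k i : cap_box_lo m N rad k i <= cap_box_hi m N rad k i.
Proof.
  pose proof grid_step_pos; pose proof (sqrt_pos (INR m * (2 * rad * grid_step rad N))).
  unfold cap_box_lo, cap_box_hi, cap_slack. destruct (Nat.ltb_spec i m); lra.
Qed.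

Lemma cap_box_vol k :
  box_vol (S m) (cap_box_lo m N rad k) (cap_box_hi m N rad k) = grid_step rad N ^ m * (2 * cap_slack m N rad).
Proof.
  simpl box_vol. rewrite (box_vol_uniform m _ _ (grid_step rad N)).
  - unfold cap_box_lo, cap_box_hi. destruct (Nat.ltb_spec m m); [lia | ring].
  - intros i Hi. unfold cap_box_lo, cap_box_hi. destruct (Nat.ltb_spec i m); [ring | lia].
Qed.

Lemma cell_of_point p : (forall i, (i < m)%nat -> - rad <= p i <= rad) ->
  exists c, (c < N ^ m)%nat /\ forall i, (i < m)%nat ->
    - rad <= cell_corner N rad c i /\ cell_corner N rad c i <= p i <= cell_corner N rad c i + grid_step rad N /\
    cell_corner N rad c i + grid_step rad N <= rad.
Proof.
  intro Hp. pose proof grid_step_pos as Hh. set (h := grid_step rad N) in *.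
  assert (HNh : INR N * h = 2 * rad) by (unfold h, grid_step; field; apply not_0_INR; lia).
  assert (Hj : forall i, exists j, (j < N)%nat /\
            ((i < m)%nat -> INR j * h <= p i + rad <= (INR j + 1) * h)).
  { intro i. destruct (Nat.ltb_spec i m) as [Hi | Hi].
    - destruct (cell_exists N h (p i + rad) ltac:(lia) Hh) as [j [Hj1 Hj2]];
        [specialize (Hp i Hi); lra | exists j; auto].
    - exists 0%nat. split; [lia | intro; lia]. }
  set (jf i := proj1_sig (constructive_indefinite_description _ (Hj i))).
  assert (Hjf : forall i, (jf i < N)%nat /\
            ((i < m)%nat -> INR (jf i) * h <= p i + rad <= (INR (jf i) + 1) * h)).
  { intro i. unfold jf. destruct (constructive_indefinite_description _ (Hj i)); auto. }
  destruct (digit_exists N m jf N_pos ltac:(intros; apply Hjf)) as [c [Hc Hdig]].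
  exists c; split; auto. intros i Hi.
  unfold cell_corner. fold h. rewrite Hdig by auto.
  destruct (Hjf i) as [Hj1 Hj2]. specialize (Hj2 Hi).
  assert (INR (S (jf i)) <= INR N) by (apply le_INR; lia). rewrite S_INR in H.
  assert ((INR (jf i) + 1) * h <= INR N * h) by (apply Rmult_le_compat_r; lra).
  assert (0 <= INR (jf i) * h) by (apply Rmult_le_pos; [apply pos_INR | lra]).
  lra.
Qed.

Lemma cap_height_close p c : dot (S m) p p = rad * rad ->
  (forall i, (i < m)%nat -> - rad <= cell_corner N rad c i /\
     cell_corner N rad c i <= p i <= cell_corner N rad c i + grid_step rad N /\
     cell_corner N rad c i + grid_step rad N <= rad) ->
  Rabs (sqrt (p m * p m) - cap_height m N rad c) <= cap_slack m N rad.
Proof.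
  intros Hs Hcell. set (q := cell_corner N rad c). set (h := grid_step rad N).
  assert (Hpq : forall i, (i < m)%nat -> Rabs (p i * p i - q i * q i) <= 2 * rad * h).
  { intros i Hi. specialize (Hcell i Hi). fold q h in Hcell.
    replace (p i * p i - q i * q i) with ((p i - q i) * (p i + q i)) by ring.
    rewrite Rabs_mult, (Rmult_comm (2 * rad) h).
    apply Rmult_le_compat; try apply Rabs_pos; apply Rabs_le; lra. }
  replace (p m * p m) with (rad * rad - dot m p p) by (simpl in Hs; lra).
  unfold cap_height, cap_slack. fold q h.
  eapply Rle_trans; [apply Rabs_sqrt_sub_le |]. apply sqrt_le_1_alt.
  replace (rad * rad - dot m p p - (rad * rad - dot m q q)) with (- (dot m p p - dot m q q)) by ring.
  rewrite Rabs_Ropp. apply Rabs_dot_self_sub_le; auto.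
Qed.

(* Box k lies over cell k on the upper hemisphere, and box N^m + k over cell k
   on the lower one. *)
Lemma sphere_in_cap_boxes p : dot (S m) p p = rad * rad ->
  exists k, (k < 2 * N ^ m)%nat /\
    forall i, (i < S m)%nat -> cap_box_lo m N rad k i <= p i <= cap_box_hi m N rad k i.
Proof.
  intro Hs.
  assert (Hp : forall i, (i < m)%nat -> - rad <= p i <= rad).
  { intros i Hi. pose proof (coord_sq_le_dot (S m) p i ltac:(lia)). rewrite Hs in H.
    simpl in H. split; nra. }
  destruct (cell_of_point p Hp) as [c [Hc Hcell]].
  pose proof (cap_height_close p c Hs Hcell) as Hclose.
  assert (Hbox : forall k, cap_cell m N k = c -> cap_sign m N k * p m >= 0 ->
            forall i, (i < S m)%nat -> cap_box_lo m N rad k i <= p i <= cap_box_hi m N rad k i).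
  { intros k Hk Hsg i Hi. unfold cap_box_lo, cap_box_hi. rewrite Hk.
    destruct (Nat.ltb_spec i m) as [Him | Him]; [specialize (Hcell i Him); lra |].
    replace i with m by lia.
    assert (Hsq : sqrt (p m * p m) = cap_sign m N k * p m).
    { unfold cap_sign in *. destruct (Nat.ltb_spec k (N ^ m)).
      - rewrite sqrt_square; lra.
      - replace (p m * p m) with ((- p m) * (- p m)) by ring. rewrite sqrt_square; lra. }
    rewrite Hsq in Hclose. apply Rabs_le_inv in Hclose.
    assert (Hsign : cap_sign m N k * cap_sign m N k = 1)
      by (unfold cap_sign; destruct (Nat.ltb_spec k (N ^ m)); ring).
    split; nra. }
  destruct (Rle_or_lt 0 (p m)) as [Hpm | Hpm].
  - exists c. split; [lia |]. apply Hbox.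
    + unfold cap_cell. destruct (Nat.ltb_spec c (N ^ m)); lia.
    + unfold cap_sign. destruct (Nat.ltb_spec c (N ^ m)); [lra | lia].
  - exists (N ^ m + c)%nat. split; [lia |]. apply Hbox.
    + unfold cap_cell. destruct (Nat.ltb_spec (N ^ m + c) (N ^ m)); lia.
    + unfold cap_sign. destruct (Nat.ltb_spec (N ^ m + c) (N ^ m)); [lia | lra].
Qed.

End SphereCover.

Lemma cap_cover_small m rad eps : rad > 0 -> eps > 0 ->
  exists N, (0 < N)%nat /\
    INR (2 * N ^ m) * (grid_step rad N ^ m * (2 * cap_slack m N rad)) < eps.
Proof.
  intros Hrad Heps.
  set (C := 4 * (2 * rad) ^ m).
  assert (HC : C > 0) by (unfold C; pose proof (pow_lt (2 * rad) m ltac:(lra)); lra).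
  assert (Hm : 0 <= 4 * INR m * rad * rad) by (pose proof (pos_INR m); nra).
  assert (Htarget : (eps / C) ^ 2 > 0) by (apply pow_lt, Rdiv_lt_0_compat; lra).
  destruct (archimed_cor1 ((eps / C) ^ 2 / (4 * INR m * rad * rad + 1))) as [N [HN HN0]].
  { apply Rdiv_lt_0_compat; lra. }
  exists N; split; auto.
  assert (HNpos : INR N > 0) by (apply lt_0_INR; auto).
  assert (HNh : INR N * grid_step rad N = 2 * rad) by (unfold grid_step; field; lra).
  rewrite mult_INR, pow_INR.
  replace (INR 2 * INR N ^ m * (grid_step rad N ^ m * (2 * cap_slack m N rad)))
    with (4 * (INR N * grid_step rad N) ^ m * cap_slack m N rad)
    by (rewrite Rpow_mult_distr; simpl; ring).
  rewrite HNh. fold C.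
  assert (Hslack : cap_slack m N rad < eps / C).
  { unfold cap_slack. rewrite <- (sqrt_pow2 (eps / C)) by (apply Rlt_le, Rdiv_lt_0_compat; lra).
    assert (Hval : INR m * (2 * rad * grid_step rad N) = 4 * INR m * rad * rad * / INR N)
      by (unfold grid_step; field; lra).
    rewrite Hval. apply sqrt_lt_1_alt. split.
    - apply Rmult_le_pos; [lra | left; apply Rinv_0_lt_compat; lra].
    - apply Rmult_lt_compat_r with (r := 4 * INR m * rad * rad + 1) in HN; [| lra].
      replace ((eps / C) ^ 2 / (4 * INR m * rad * rad + 1) * (4 * INR m * rad * rad + 1))
        with ((eps / C) ^ 2) in HN by (field; lra).
      pose proof (Rinv_0_lt_compat _ HNpos). nra. }
  apply Rmult_lt_compat_l with (r := C) in Hslack; [| lra].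
  replace (C * (eps / C)) with eps in Hslack by (field; lra). lra.
Qed.

Lemma sphere_null m rad : rad > 0 -> null_set (S m) (fun p => dot (S m) p p = rad * rad).
Proof.
  intro Hrad. apply null_set_of_uniform_cover; [lia |]. intros eps Heps.
  destruct (cap_cover_small m rad eps Hrad Heps) as [N [HN Hsmall]].
  exists (2 * N ^ m)%nat, (grid_step rad N ^ m * (2 * cap_slack m N rad)),
    (cap_box_lo m N rad), (cap_box_hi m N rad).
  split; [| split; [| split]].
  - intros k i _ _. apply cap_box_valid; auto.
  - intros k _. rewrite cap_box_vol by auto. lra.
  - intros p _ Hp. apply sphere_in_cap_boxes; auto.
  - exact Hsmall.
Qed.

Theorem proposition2p2 (d : nat) (h0 lam0 : R) (Om : pt -> Prop) (nu : pt -> pt) (hs : pt -> R) :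
  (2 <= d)%nat -> h0 > 0 -> lam0 > 0 ->
  (forall x, Om x -> in_Rd d x) -> open_Rd d Om -> (exists x, Om x) ->
  connected d Om -> convex_set d Om -> bounded_set d Om ->
  C1_domain_inner_normal d Om nu ->
  (forall x, in_Rd d x ->
     is_inf (fun v => exists X, bdry d Om X /\ v = h0 + lam0 * dot d (nu X) (vsub x X)) (hs x)) ->
  weak_solution d Om h0 lam0 hs.
Proof.
  intros Hd _ Hl Hin Hop Hne _ Hcv _ HC Hinf.
  split; [| split; [| split]].
  - exact (ext_concave d Om nu Hin Hop Hcv HC h0 lam0 hs Hne Hl Hinf).
  - intros E _ HE. destruct d as [| m]; [lia |].
    apply (null_set_mono _ _ _ (sphere_null m lam0 Hl)).
    intros p _ [x [Hx Hsg]].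
    apply (subgrad_on_sphere (S m) Om nu Hin Hop Hcv HC h0 lam0 hs Hne Hl Hinf x p); auto.
  - intros X HX. apply (hs_bdry d Om nu Hin Hop Hcv HC h0 lam0 hs Hl Hinf X HX).
  - intros x0 nu0 HG Hsn Huniq eps Heps.
    destruct (Gamma_normal_slope d Om nu Hin Hop Hcv HC h0 lam0 hs Hne Hl Hinf x0 nu0 HG Hsn Huniq)
      as [delta [Hdelta Hslope]].
    exists delta; split; auto. intros t Ht.
    rewrite Hslope by auto. replace (lam0 * t / t - lam0) with 0 by (field; lra).
    rewrite Rabs_R0; lra.
Qed.
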